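(* Consider the system $\frac{dT}{dt}=s+r_TT\left(1-\frac{T+I}{T_{\max}}\right)-dT-\frac{bTV}{T+I}$, $\frac{dI}{dt}=r_II\left(1-\frac{T+I}{T_{\max}}\right)+\frac{bTV}{T+I}-\delta I$, $\frac{dV}{dt}=\rho R^*I-cV-\frac{bTV}{T+I}$. There exist parameter values for which ${\cal R}_0<1$ and there exist exactly two positive steady states, one stable and one unstable. There is a variation of parameters under which these two steady states coalesce in a generic fold bifurcation.
   Context: Parameters $s,r_T,T_{\max},d,b,r_I,\delta,\rho,R^*,c$ are positive constants. Let $p_0=\left(r_T-d+\sqrt{(r_T-d)^2+\frac{4sr_T}{T_{\max}}}\right)\frac{T_{\max}}{2r_T}$; the disease-free equilibrium is $(T,I,V)=(p_0,0,0)$. For parameters with $\delta>r_I(1-p_0/T_{\max})$ the basic reproductive ratio is ${\cal R}_0=\frac{b\rho R^*}{(b+c)\left(\delta-r_I(1-\frac{p_0}{T_{\max}})\right)}$. A positive steady state is a steady state with $T,I,V>0$; a generic fold bifurcation is a non-degenerate saddle-node bifurcation. *)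

From Stdlib Require Import Reals.
From Coquelicot Require Import Coquelicot.
Open Scope R_scope.

Record par := mkPar {
  ps : R; prT : R; pTmax : R; pd : R; pb : R;
  prI : R; pdelta : R; prho : R; pRstar : R; pc : R }.

Definition par_pos (p : par) : Prop :=
  0 < ps p /\ 0 < prT p /\ 0 < pTmax p /\ 0 < pd p /\ 0 < pb p /\
  0 < prI p /\ 0 < pdelta p /\ 0 < prho p /\ 0 < pRstar p /\ 0 < pc p.

Definition path (p q : par) (mu : R) : par :=
  mkPar (ps p + mu * ps q) (prT p + mu * prT q) (pTmax p + mu * pTmax q)
        (pd p + mu * pd q) (pb p + mu * pb q) (prI p + mu * prI q)
        (pdelta p + mu * pdelta q) (prho p + mu * prho q)
        (pRstar p + mu * pRstar q) (pc p + mu * pc q).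

Record st := St { xT : R; xI : R; xV : R }.

Definition coord (i : nat) (x : st) : R :=
  match i with 0%nat => xT x | 1%nat => xI x | _ => xV x end.

Definition vadd (x y : st) : st := St (xT x + xT y) (xI x + xI y) (xV x + xV y).
Definition vscal (t : R) (x : st) : st := St (t * xT x) (t * xI x) (t * xV x).
Definition ebasis (j : nat) : st :=
  match j with 0%nat => St 1 0 0 | 1%nat => St 0 1 0 | _ => St 0 0 1 end.
Definition dot (x y : st) : R := xT x * xT y + xI x * xI y + xV x * xV y.
Definition vzero : st := St 0 0 0.

Definition fT (p : par) (x : st) : R :=
  let T := xT x in let I := xI x in let V := xV x in
  ps p + prT p * T * (1 - (T + I) / pTmax p) - pd p * T - pb p * T * V / (T + I).
Definition fI (p : par) (x : st) : R :=
  let T := xT x in let I := xI x in let V := xV x in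
  prI p * I * (1 - (T + I) / pTmax p) + pb p * T * V / (T + I) - pdelta p * I.
Definition fV (p : par) (x : st) : R :=
  let T := xT x in let I := xI x in let V := xV x in
  prho p * pRstar p * I - pc p * V - pb p * T * V / (T + I).

Definition F (p : par) (i : nat) (x : st) : R :=
  match i with 0%nat => fT p x | 1%nat => fI p x | _ => fV p x end.

Definition Fvec (p : par) (x : st) : st := St (F p 0 x) (F p 1 x) (F p 2 x).

Definition steady (p : par) (x : st) : Prop :=
  fT p x = 0 /\ fI p x = 0 /\ fV p x = 0.

Definition positive_state (x : st) : Prop := 0 < xT x /\ 0 < xI x /\ 0 < xV x.

(* Disease-free T-value p_0 and basic reproductive ratio R_0. *)
Definition p0 (p : par) : R :=
  (prT p - pd p + sqrt ((prT p - pd p) ^ 2 + 4 * ps p * prT p / pTmax p))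
    * pTmax p / (2 * prT p).

Definition basicR0 (p : par) : R :=
  pb p * prho p * pRstar p /
    ((pb p + pc p) * (pdelta p - prI p * (1 - p0 p / pTmax p))).

Definition Jac (p : par) (x : st) (i j : nat) : R :=
  Derive (fun t => F p i (vadd x (vscal t (ebasis j)))) 0.

Definition Jv (p : par) (x : st) (v : st) : st :=
  St (Jac p x 0 0 * xT v + Jac p x 0 1 * xI v + Jac p x 0 2 * xV v)
     (Jac p x 1 0 * xT v + Jac p x 1 1 * xI v + Jac p x 1 2 * xV v)
     (Jac p x 2 0 * xT v + Jac p x 2 1 * xI v + Jac p x 2 2 * xV v).

Definition wJ (p : par) (x : st) (w : st) : st :=
  St (xT w * Jac p x 0 0 + xI w * Jac p x 1 0 + xV w * Jac p x 2 0)
     (xT w * Jac p x 0 1 + xI w * Jac p x 1 1 + xV w * Jac p x 2 1)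
     (xT w * Jac p x 0 2 + xI w * Jac p x 1 2 + xV w * Jac p x 2 2).

Definition trJ (p : par) (x : st) : R := Jac p x 0 0 + Jac p x 1 1 + Jac p x 2 2.
Definition M2J (p : par) (x : st) : R :=
  (Jac p x 0 0 * Jac p x 1 1 - Jac p x 0 1 * Jac p x 1 0)
  + (Jac p x 0 0 * Jac p x 2 2 - Jac p x 0 2 * Jac p x 2 0)
  + (Jac p x 1 1 * Jac p x 2 2 - Jac p x 1 2 * Jac p x 2 1).
Definition detJ (p : par) (x : st) : R :=
  Jac p x 0 0 * (Jac p x 1 1 * Jac p x 2 2 - Jac p x 1 2 * Jac p x 2 1)
  - Jac p x 0 1 * (Jac p x 1 0 * Jac p x 2 2 - Jac p x 1 2 * Jac p x 2 0)
  + Jac p x 0 2 * (Jac p x 1 0 * Jac p x 2 1 - Jac p x 1 1 * Jac p x 2 0).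

(* Characteristic polynomial det(lambda I - J) = l^3 - tr l^2 + M2 l - det,
   evaluated at a complex number. *)
Definition charpoly (p : par) (x : st) (l : C) : C :=
  Cplus (Cminus (Cmult l (Cmult l l)) (Cmult (RtoC (trJ p x)) (Cmult l l)))
        (Cminus (Cmult (RtoC (M2J p x)) l) (RtoC (detJ p x))).

Definition eigenvalue (p : par) (x : st) (l : C) : Prop := charpoly p x l = RtoC 0.

Definition lin_stable (p : par) (x : st) : Prop :=
  forall l : C, eigenvalue p x l -> Re l < 0.
Definition lin_unstable (p : par) (x : st) : Prop :=
  exists l : C, eigenvalue p x l /\ 0 < Re l.

(* Generic (non-degenerate) fold / saddle-node bifurcation of the family
   x' = F(P mu, x) at (x, mu0)  (Sotomayor / Kuznetsov conditions). *)
Definition generic_fold (P : R -> par) (mu0 : R) (x : st) : Prop :=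
  steady (P mu0) x /\
  (* 0 is a simple eigenvalue: char. polynomial vanishes at 0 with nonzero
     derivative there (the derivative at 0 is M2J). *)
  detJ (P mu0) x = 0 /\ M2J (P mu0) x <> 0 /\
  (forall l : C, eigenvalue (P mu0) x l -> l <> RtoC 0 -> Re l <> 0) /\
  exists v w : st,
    v <> vzero /\ w <> vzero /\
    Jv (P mu0) x v = vzero /\ wJ (P mu0) x w = vzero /\
    dot w (St (Derive (fun m => F (P m) 0 x) mu0)
              (Derive (fun m => F (P m) 1 x) mu0)
              (Derive (fun m => F (P m) 2 x) mu0)) <> 0 /\
    dot w (St (Derive_n (fun t => F (P mu0) 0 (vadd x (vscal t v))) 2 0)
              (Derive_n (fun t => F (P mu0) 1 (vadd x (vscal t v))) 2 0)
              (Derive_n (fun t => F (P mu0) 2 (vadd x (vscal t v))) 2 0)) <> 0.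

Definition state_continuous_at (y : R -> st) (mu : R) : Prop :=
  continuity_pt (fun m => xT (y m)) mu /\
  continuity_pt (fun m => xI (y m)) mu /\
  continuity_pt (fun m => xV (y m)) mu.

(* Fix s = d = 3/8, r_T = 1/2, T_max = 1, b = 9/5, r_I = 2, delta = 3, rho = 4, R* = 1 and
   vary only c.  Then p_0 = T_max, so R_0 = 12 / (9 + 5 c), and the positive steady states are
   exactly the points with T = (4N - 1)/3, I = (1 - N)/3, V = (1 - N)(3 - 2N)/(3c) where N = T + I
   is a root in (1/4, 1) of (30c + 72) N^2 + (15c - 126) N + 27.  For c = 26/35 the roots are
   7/22 and 9/10: Routh-Hurwitz shows the first steady state stable, and a positive Jacobian
   determinant gives the second a positive real eigenvalue.  Raising c linearly to 6/5 makes the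
   discriminant vanish, the two roots meet at N = 1/2, and there the Jacobian has a simple zero
   eigenvalue whose explicit left and right null vectors verify the Sotomayor conditions. *)

From Stdlib Require Import Reals Lra Psatz.
From Coquelicot Require Import Coquelicot.
Open Scope R_scope.

Section Jacobian.
Variables (p : par) (T I V : R).
Local Notation N := (T + I).
Local Notation K := (pTmax p).
Hypotheses (HN : N <> 0) (HK : K <> 0).

Ltac Jac_entry := unfold Jac; apply is_derive_unique;
  unfold F, fT, fI, fV, vadd, vscal, ebasis; cbn -[Rplus Rmult Rminus Rdiv];
  auto_derive; [repeat split; lra | field; auto].

Lemma Jac00 :
  Jac p (St T I V) 0 0 = prT p * (1 - N / K) - prT p * T / K - pd p - pb p * V * I / N ^ 2.
Proof. Jac_entry. Qed.
Lemma Jac01 : Jac p (St T I V) 0 1 = - prT p * T / K + pb p * T * V / N ^ 2.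
Proof. Jac_entry. Qed.
Lemma Jac02 : Jac p (St T I V) 0 2 = - pb p * T / N.
Proof. Jac_entry. Qed.
Lemma Jac10 : Jac p (St T I V) 1 0 = - prI p * I / K + pb p * V * I / N ^ 2.
Proof. Jac_entry. Qed.
Lemma Jac11 :
  Jac p (St T I V) 1 1 = prI p * (1 - N / K) - prI p * I / K - pb p * T * V / N ^ 2 - pdelta p.
Proof. Jac_entry. Qed.
Lemma Jac12 : Jac p (St T I V) 1 2 = pb p * T / N.
Proof. Jac_entry. Qed.
Lemma Jac20 : Jac p (St T I V) 2 0 = - pb p * V * I / N ^ 2.
Proof. Jac_entry. Qed.
Lemma Jac21 : Jac p (St T I V) 2 1 = prho p * pRstar p + pb p * T * V / N ^ 2.
Proof. Jac_entry. Qed.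
Lemma Jac22 : Jac p (St T I V) 2 2 = - pc p - pb p * T / N.
Proof. Jac_entry. Qed.

End Jacobian.

Ltac Jac_eval :=
  rewrite ?Jac00, ?Jac01, ?Jac02, ?Jac10, ?Jac11, ?Jac12, ?Jac20, ?Jac21, ?Jac22
    by (simpl; lra).

Section CharacteristicPolynomial.
Variables (p : par) (x : st).
Local Notation tr := (trJ p x).
Local Notation m2 := (M2J p x).
Local Notation det := (detJ p x).

Lemma eigenvalue_parts a b : eigenvalue p x (a, b) ->
  a * a * a - 3 * a * b * b - tr * (a * a - b * b) + m2 * a - det = 0 /\
  b * (3 * a * a - b * b - 2 * tr * a + m2) = 0.
Proof.
unfold eigenvalue, charpoly, Cplus, Cminus, Cmult, Copp, RtoC; simpl.
intro H; injection H; intros Him Hre; split; nra.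
Qed.

Lemma lin_stable_Routh_Hurwitz : tr < 0 -> det < 0 -> tr * m2 < det -> lin_stable p x.
Proof.
intros Htr Hdet Hrh [a b] Hl; simpl.
apply eigenvalue_parts in Hl as [Hre Him].
destruct (Rlt_or_le a 0) as [Ha | Ha]; [exact Ha | exfalso].
assert (Hm2 : 0 < m2) by nra.
assert (Ha3 : 0 <= a * a * a) by (apply Rmult_le_pos; nra).
destruct (Req_dec b 0) as [Hb | Hb].
- subst b. nra.
- (* eliminating b^2 from the real part leaves a cubic in a that is negative for a >= 0 *)
  assert (Hb2 : b * b = 3 * a * a - 2 * tr * a + m2).
  { apply Rmult_integral in Him as [Him | Him]; [contradiction | lra]. }
  assert (Hcubic : -8 * a * a * a + 8 * tr * a * a - 2 * m2 * a - 2 * tr * tr * a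
                   + tr * m2 - det = 0).
  { rewrite <- Hre. replace (3 * a * b * b) with (3 * a * (b * b)) by ring.
    rewrite Hb2. ring. }
  assert (0 <= tr * tr * a) by (apply Rmult_le_pos; nra).
  nra.
Qed.

Lemma lin_unstable_of_detJ_pos : 0 < det -> lin_unstable p x.
Proof.
intro Hdet.
set (f z := z * z * z - tr * z * z + m2 * z - det).
set (M := 1 + Rabs tr + Rabs m2 + det).
assert (HM : 1 <= M) by (unfold M; pose proof (Rabs_pos tr); pose proof (Rabs_pos m2); lra).
assert (HfM : 0 < f M).
{ assert (Hq : 1 + det <= M * M - tr * M + m2).
  { pose proof (Rle_abs (- m2)) as Hm2; rewrite Rabs_Ropp in Hm2.
    assert (tr * M <= Rabs tr * M) by (apply Rmult_le_compat_r; [lra | apply Rle_abs]).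
    assert (M - Rabs tr = 1 + Rabs m2 + det) by (unfold M; ring).
    assert (1 + Rabs m2 + det <= M * (1 + Rabs m2 + det)) by (pose proof (Rabs_pos m2); nra).
    nra. }
  unfold f. nra. }
destruct (IVT f 0 M) as [z [[Hz0 HzM] Hz]]; [unfold f; reg | lra | unfold f; lra | lra |].
exists (RtoC z); split.
- unfold eigenvalue, charpoly, Cplus, Cminus, Cmult, Copp, RtoC; simpl.
  unfold f in Hz; f_equal; nra.
- simpl. destruct Hz0 as [Hz0 | <-]; [exact Hz0 | unfold f in Hz; lra].
Qed.

Lemma eigenvalue_imaginary_axis b : det = 0 -> tr <> 0 -> eigenvalue p x (0, b) -> b = 0.
Proof.
intros Hdet Htr Hl. apply eigenvalue_parts in Hl as [Hre _].
assert (Hb : tr * (b * b) = 0) by nra.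
apply Rmult_integral in Hb as [Hb | Hb]; [contradiction | nra].
Qed.

End CharacteristicPolynomial.

Definition model (c : R) : par := mkPar (3/8) (1/2) 1 (3/8) (9/5) 2 3 4 1 c.

Definition equilibrium (c N : R) : st :=
  St ((4 * N - 1) / 3) ((1 - N) / 3) ((1 - N) * (3 - 2 * N) / (3 * c)).

Definition equilibrium_poly (c N : R) : R := (30 * c + 72) * N ^ 2 + (15 * c - 126) * N + 27.

Lemma par_pos_model c : 0 < c -> par_pos (model c).
Proof. intro Hc; unfold par_pos, model; simpl; lra. Qed.

Lemma p0_model c : p0 (model c) = 1.
Proof.
unfold p0, model; cbn [ps prT pTmax pd].
replace ((1/2 - 3/8) ^ 2 + 4 * (3/8) * (1/2) / 1) with ((7/8) * (7/8)) by field.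
rewrite sqrt_square by lra. field.
Qed.

Lemma basicR0_model c : 0 < c -> basicR0 (model c) = 12 / (9 + 5 * c).
Proof. intro Hc; unfold basicR0; rewrite p0_model; unfold model; simpl; field; lra. Qed.

Lemma steady_equilibrium c N : c <> 0 -> N <> 0 -> equilibrium_poly c N = 0 ->
  steady (model c) (equilibrium c N).
Proof.
intros Hc HN Hq. unfold equilibrium_poly in Hq.
unfold steady, fT, fI, fV, model, equilibrium; simpl.
replace ((4 * N - 1) / 3 + (1 - N) / 3) with N by field.
repeat split; field_simplify; try (unfold Rdiv; apply Rmult_eq_0_compat_r); auto; nra.
Qed.

Lemma positive_equilibrium c N : 0 < c -> 1/4 < N < 1 -> positive_state (equilibrium c N).
Proof.
intros Hc HN; unfold positive_state, equilibrium; simpl.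
repeat split; try lra. apply Rdiv_lt_0_compat; nra.
Qed.

Lemma equilibrium_inj c N N' : equilibrium c N = equilibrium c N' -> N = N'.
Proof. unfold equilibrium; intro H; injection H; intros _ HI _; lra. Qed.

Lemma positive_steady_model_equilibrium c T I V : 0 < c ->
  steady (model c) (St T I V) -> positive_state (St T I V) ->
  equilibrium_poly c (T + I) = 0 /\ St T I V = equilibrium c (T + I).
Proof.
unfold steady, positive_state, fT, fI, fV, model; simpl.
intros Hc [HfT [HfI HfV]] [HT [HI HV]].
set (N := T + I) in *.
set (W := 9/5 * T * V / N) in *.
assert (HW : W * N = 9/5 * T * V) by (unfold W, N in *; field; lra).
clearbody W.
assert (HWI : W = I * (1 + 2 * N)) by nra.
assert (HVI : c * V = I * (3 - 2 * N)) by nra.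
assert (HTN : T = (4 * N - 1) / 3).
{ assert (Hsum : 3 * (4 * N + 3) * (3 * T - 4 * N + 1) = 0) by (unfold N in *; nra).
  apply Rmult_integral in Hsum as [H0 | H0]; [unfold N in *; lra | lra]. }
split.
- assert (Hpoly : I * equilibrium_poly c N = 0).
  { assert (Hflux : c * (I * (1 + 2 * N)) * N = 9/5 * T * (c * V))
      by (rewrite <- HWI, Rmult_assoc, HW; ring).
    rewrite HVI, HTN in Hflux.
    transitivity (15 * (c * (I * (1 + 2 * N)) * N
                        - 9/5 * ((4 * N - 1) / 3) * (I * (3 - 2 * N)))).
    - unfold equilibrium_poly; field.
    - rewrite Hflux; ring. }
  apply Rmult_integral in Hpoly as [H0 | H0]; [lra | exact H0].
- assert (HIN : I = (1 - N) / 3) by (unfold N in *; lra).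
  unfold equilibrium. f_equal; [exact HTN | exact HIN |].
  apply (Rmult_eq_reg_l c); [| lra]. rewrite HVI, HIN. field. lra.
Qed.

Lemma positive_steady_model_26_35 x : steady (model (26/35)) x -> positive_state x ->
  x = equilibrium (26/35) (7/22) \/ x = equilibrium (26/35) (9/10).
Proof.
destruct x as [T I V]; intros Hs Hx.
destruct (positive_steady_model_equilibrium (26/35) T I V) as [Hq ->]; try lra; auto.
assert (Hroots : (T + I - 7/22) * (T + I - 9/10) = 0)
  by (unfold equilibrium_poly in Hq; nra).
apply Rmult_integral in Hroots as [H | H]; [left | right];
  f_equal; lra.
Qed.

Lemma lin_stable_lower_equilibrium : lin_stable (model (26/35)) (equilibrium (26/35) (7/22)).
Proof. apply lin_stable_Routh_Hurwitz; unfold trJ, M2J, detJ, equilibrium; Jac_eval; simpl; lra. Qed.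

Lemma lin_unstable_upper_equilibrium : lin_unstable (model (26/35)) (equilibrium (26/35) (9/10)).
Proof. apply lin_unstable_of_detJ_pos; unfold detJ, equilibrium; Jac_eval; simpl; lra. Qed.

Definition vary_c (k : R) : par := mkPar 0 0 0 0 0 0 0 0 0 k.

Lemma path_model_vary_c c k mu : path (model c) (vary_c k) mu = model (c + mu * k).
Proof. unfold path, model, vary_c; simpl; f_equal; ring. Qed.

Definition c_path (mu : R) : R := 26/35 + mu * (16/35).

Definition disc (mu : R) : R := (1 - mu) * (64 - mu).

(* For s = -sqrt (disc mu) and s = sqrt (disc mu) these are the two roots of
   equilibrium_poly (c_path mu); they merge at mu = 1, where disc vanishes. *)
Definition branch (mu s : R) : R := (67 - 4 * mu + 4 * s) / (110 + 16 * mu).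

Lemma branch_root mu s : 0 <= mu <= 1 -> s * s = disc mu ->
  equilibrium_poly (c_path mu) (branch mu s) = 0 /\ 1/4 < branch mu s < 1.
Proof.
unfold disc; intros Hmu Hs.
assert (Hs8 : -8 <= s <= 8) by nra.
split; [| unfold branch; split].
- unfold equilibrium_poly, c_path, branch.
  field_simplify; [| lra]. unfold Rdiv; apply Rmult_eq_0_compat_r; nra.
- apply Rmult_lt_reg_r with (110 + 16 * mu); [lra |]. field_simplify; nra.
- apply Rmult_lt_reg_r with (110 + 16 * mu); [lra |]. field_simplify; lra.
Qed.

Definition branch_state (e mu : R) : st := equilibrium (c_path mu) (branch mu (e * sqrt (disc mu))).

Lemma branch_state_steady_positive e mu : e * e = 1 -> 0 <= mu <= 1 ->
  steady (model (c_path mu)) (branch_state e mu) /\ positive_state (branch_state e mu).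
Proof.
intros He Hmu.
assert (Hsq : (e * sqrt (disc mu)) * (e * sqrt (disc mu)) = disc mu).
{ transitivity (e * e * (sqrt (disc mu) * sqrt (disc mu))); [ring |].
  rewrite He, sqrt_sqrt; [ring | unfold disc; nra]. }
destruct (branch_root mu _ Hmu Hsq) as [Hq HN].
split.
- apply steady_equilibrium; [unfold c_path; lra | lra | exact Hq].
- apply positive_equilibrium; [unfold c_path; lra | exact HN].
Qed.

Lemma branch_state_continuous e mu : 0 <= mu <= 1 -> state_continuous_at (branch_state e) mu.
Proof.
intro Hmu; unfold state_continuous_at, branch_state, equilibrium, branch, c_path, disc; simpl.
split; [| split]; reg; nra.
Qed.

Lemma branch_states_distinct mu : 0 <= mu < 1 -> branch_state (-1) mu <> branch_state 1 mu.
Proof.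
intros Hmu H. apply equilibrium_inj in H.
assert (Hdisc : 0 < sqrt (disc mu)) by (apply sqrt_lt_R0; unfold disc; nra).
unfold branch in H. apply (f_equal (Rmult (110 + 16 * mu))) in H.
field_simplify in H; lra.
Qed.

Lemma branch_state_start_lower : branch_state (-1) 0 = equilibrium (26/35) (7/22).
Proof.
unfold branch_state, branch, c_path, disc.
replace ((1 - 0) * (64 - 0)) with (8 * 8) by ring. rewrite sqrt_square by lra.
f_equal; field.
Qed.
Lemma branch_state_start_upper : branch_state 1 0 = equilibrium (26/35) (9/10).
Proof.
unfold branch_state, branch, c_path, disc.
replace ((1 - 0) * (64 - 0)) with (8 * 8) by ring. rewrite sqrt_square by lra.
f_equal; field.
Qed.
Lemma branch_state_end e : branch_state e 1 = equilibrium (6/5) (1/2).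
Proof.
unfold branch_state, branch, c_path, disc.
replace ((1 - 1) * (64 - 1)) with 0 by ring. rewrite sqrt_0.
f_equal; field.
Qed.

Ltac derive_in_mu := apply is_derive_unique;
  unfold F, fT, fI, fV, path, model, vary_c; cbn -[Rplus Rmult Rminus Rdiv];
  auto_derive; [repeat split; lra | field; lra].

Lemma transversality_vary_c c k mu T I V w : T + I <> 0 ->
  dot w (St (Derive (fun m => F (path (model c) (vary_c k) m) 0 (St T I V)) mu)
            (Derive (fun m => F (path (model c) (vary_c k) m) 1 (St T I V)) mu)
            (Derive (fun m => F (path (model c) (vary_c k) m) 2 (St T I V)) mu))
  = - k * V * xV w.
Proof.
intro HN.
assert (D0 : Derive (fun m => F (path (model c) (vary_c k) m) 0 (St T I V)) mu = 0)
  by derive_in_mu.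
assert (D1 : Derive (fun m => F (path (model c) (vary_c k) m) 1 (St T I V)) mu = 0)
  by derive_in_mu.
assert (D2 : Derive (fun m => F (path (model c) (vary_c k) m) 2 (St T I V)) mu = - k * V)
  by derive_in_mu.
rewrite D0, D1, D2; unfold dot; simpl; ring.
Qed.

Lemma fold_Jacobian_invariants :
  trJ (model (6/5)) (equilibrium (6/5) (1/2)) = -241/40 /\
  M2J (model (6/5)) (equilibrium (6/5) (1/2)) = 183/40 /\
  detJ (model (6/5)) (equilibrium (6/5) (1/2)) = 0.
Proof. unfold trJ, M2J, detJ, equilibrium; Jac_eval; simpl; repeat split; field. Qed.

Lemma fold_right_kernel : Jv (model (6/5)) (equilibrium (6/5) (1/2)) (St (-8) 2 5) = vzero.
Proof. unfold Jv, vzero, equilibrium; Jac_eval; simpl; f_equal; field. Qed.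

Lemma fold_left_kernel : wJ (model (6/5)) (equilibrium (6/5) (1/2)) (St 8 (-22) (-15)) = vzero.
Proof. unfold wJ, vzero, equilibrium; Jac_eval; simpl; f_equal; field. Qed.

Lemma Derive_n_2_of_local_derive (f g : R -> R) (x l : R) (eps : posreal) :
  (forall t, Rabs (t - x) < eps -> is_derive f t (g t)) -> is_derive g x l ->
  Derive_n f 2 x = l.
Proof.
intros Hf Hg; simpl.
rewrite (Derive_ext_loc _ g); [now apply is_derive_unique |].
exists eps; intros t Ht; apply is_derive_unique, Hf, Ht.
Qed.

(* The derivative of T V / (T + I) along the line through the fold point in direction (-8, 2, 5). *)
Definition fold_flux_slope (t : R) : R :=
  ((-8) * (5/18 + 5 * t) + (1/3 - 8 * t) * 5) / (1/2 - 6 * t)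
  + 6 * (1/3 - 8 * t) * (5/18 + 5 * t) / (1/2 - 6 * t) ^ 2.

Ltac fold_second_derivative g :=
  apply (Derive_n_2_of_local_derive _ g 0 _ (mkposreal (1/24) ltac:(lra)));
  [ intros t Ht; simpl in Ht; apply Rabs_def2 in Ht;
    unfold F, fT, fI, fV, vadd, vscal, model, equilibrium, fold_flux_slope;
    cbn -[Rplus Rmult Rminus Rdiv]; auto_derive; [lra | field; lra]
  | unfold fold_flux_slope; auto_derive; [repeat split; lra | field] ].

Lemma fold_second_derivatives :
  let x := equilibrium (6/5) (1/2) in
  let v := St (-8) 2 5 in
  Derive_n (fun t => F (model (6/5)) 0 (vadd x (vscal t v))) 2 0 = 192 /\
  Derive_n (fun t => F (model (6/5)) 1 (vadd x (vscal t v))) 2 0 = -192 /\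
  Derive_n (fun t => F (model (6/5)) 2 (vadd x (vscal t v))) 2 0 = 240.
Proof.
(* The arguments of fold_second_derivative are the first derivatives of the components along the line. *)
repeat split.
- fold_second_derivative
    (fun t => 1/2 * (-8 * (1 - (1/2 - 6 * t)) + 6 * (1/3 - 8 * t)) + 3 - 9/5 * fold_flux_slope t).
- fold_second_derivative
    (fun t => 2 * (2 * (1 - (1/2 - 6 * t)) + 6 * (1/6 + 2 * t)) + 9/5 * fold_flux_slope t - 6).
- fold_second_derivative (fun t => 2 - 9/5 * fold_flux_slope t).
Qed.

Lemma generic_fold_vary_c :
  generic_fold (path (model (26/35)) (vary_c (16/35))) 1 (equilibrium (6/5) (1/2)).
Proof.
unfold generic_fold.
rewrite path_model_vary_c; replace (26/35 + 1 * (16/35)) with (6/5) by field.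
destruct fold_Jacobian_invariants as [Htr [Hm2 Hdet]].
destruct fold_second_derivatives as [D0 [D1 D2]].
split; [| split; [| split; [| split]]].
- apply steady_equilibrium; [lra | lra | unfold equilibrium_poly; field].
- exact Hdet.
- rewrite Hm2; lra.
- intros [a b] Hl Hnz Hre; simpl in Hre; subst a.
  apply Hnz; rewrite (eigenvalue_imaginary_axis _ _ b Hdet); [reflexivity | lra | exact Hl].
- exists (St (-8) 2 5), (St 8 (-22) (-15)).
  split; [| split; [| split; [| split; [| split]]]].
  + intro H; injection H; lra.
  + intro H; injection H; lra.
  + exact fold_right_kernel.
  + exact fold_left_kernel.
  + unfold equilibrium; rewrite transversality_vary_c by lra; simpl; lra.
  + rewrite D0, D1, D2; unfold dot; simpl; lra.
Qed.

Theorem theorem4 :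
  exists p : par,
    par_pos p /\
    prI p * (1 - p0 p / pTmax p) < pdelta p /\
    basicR0 p < 1 /\
    exists x1 x2 : st,
      x1 <> x2 /\
      steady p x1 /\ positive_state x1 /\
      steady p x2 /\ positive_state x2 /\
      (forall x : st, steady p x -> positive_state x -> x = x1 \/ x = x2) /\
      lin_stable p x1 /\ lin_unstable p x2 /\
      (* a variation of parameters along which x1 and x2 coalesce in a generic fold *)
      exists (q : par) (mu0 : R) (y1 y2 : R -> st),
        0 < mu0 /\
        (forall mu, 0 <= mu <= mu0 -> par_pos (path p q mu)) /\
        y1 0 = x1 /\ y2 0 = x2 /\
        (forall mu, 0 <= mu <= mu0 ->
           steady (path p q mu) (y1 mu) /\ positive_state (y1 mu) /\
           steady (path p q mu) (y2 mu) /\ positive_state (y2 mu) /\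
           state_continuous_at y1 mu /\ state_continuous_at y2 mu) /\
        (forall mu, 0 <= mu < mu0 -> y1 mu <> y2 mu) /\
        y1 mu0 = y2 mu0 /\
        generic_fold (path p q) mu0 (y1 mu0).
Proof.
exists (model (26/35)).
split; [apply par_pos_model; lra |].
split; [rewrite p0_model; simpl; lra |].
split; [rewrite basicR0_model by lra; lra |].
exists (equilibrium (26/35) (7/22)), (equilibrium (26/35) (9/10)).
split; [intro H; apply equilibrium_inj in H; lra |].
do 2 (split; [apply steady_equilibrium; [lra | lra | unfold equilibrium_poly; field] |];
      split; [apply positive_equilibrium; lra |]).
split; [exact positive_steady_model_26_35 |].
split; [exact lin_stable_lower_equilibrium |].
split; [exact lin_unstable_upper_equilibrium |].
exists (vary_c (16/35)), 1, (branch_state (-1)), (branch_state 1).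
split; [lra |].
split; [intros mu Hmu; rewrite path_model_vary_c; apply par_pos_model; lra |].
split; [exact branch_state_start_lower |].
split; [exact branch_state_start_upper |].
split.
{ intros mu Hmu; rewrite path_model_vary_c.
  destruct (branch_state_steady_positive (-1) mu) as [Hs1 Hx1]; [ring | exact Hmu |].
  destruct (branch_state_steady_positive 1 mu) as [Hs2 Hx2]; [ring | exact Hmu |].
  refine (conj Hs1 (conj Hx1 (conj Hs2 (conj Hx2 (conj _ _)))));
    apply branch_state_continuous, Hmu. }
split; [exact branch_states_distinct |].
rewrite !branch_state_end; split; [reflexivity | exact generic_fold_vary_c].
Qed.
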